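(* With the notation below, there exists a strategy (ancilla $E$, unitary $U$ on $AE=B_0B_1B'$, projective measurement $\{R^{b'}\}_{b'\in\{0,1\}}$ on $B'$, and projective measurements $\{\Pi^{\mathbf e}_{i\mathbf s b'}\}_{\mathbf e\in\{0,1\}^n}$ on $B_i$) achieving $p_n=\bigl(\frac34\bigr)^n$ for every $n\ge1$. Notation: for $a\in\{0,1\}$, $\lvert \hat a\rangle=\frac{1}{\sqrt2}(\lvert 0\rangle+(-1)^a\lvert 1\rangle)$; for bits $r_0,r_1,s$, $\lvert\psi^{s}_{r_0r_1}\rangle_{A_0A_1}=\lvert r_0\rangle_{A_s}\otimes\lvert \hat r_1\rangle_{A_{\bar s}}$; for strings $\mathbf r_0,\mathbf r_1,\mathbf s\in\{0,1\}^n$, $\lvert\Psi^{\mathbf s}_{\mathbf r_0\mathbf r_1}\rangle_A=\bigotimes_{j=1}^n\lvert\psi^{s^j}_{r_0^jr_1^j}\rangle_{A_0^jA_1^j}$. A strategy consists of a finite-dimensional ancilla $E$ in a pure state $\lvert\chi\rangle$, a unitary $U$ on $AE$ with $AE=B_0B_1B'$ (finite-dimensional subsystems), a projective measurement $\{R^{b'}\}$ on $B'$, and for each $i,\mathbf s,b'$ a projective measurement $\{\Pi^{\mathbf e}_{i\mathbf s b'}\}_{\mathbf e\in\{0,1\}^n}$ on $B_i$; with $\lvert\Phi^{\mathbf s}_{\mathbf r_0\mathbf r_1}\rangle=U(\lvert\Psi^{\mathbf s}_{\mathbf r_0\mathbf r_1}\rangle\otimes\lvert\chi\rangle)$, $$p_n=\frac{1}{2^{3n}}\sum_{\mathbf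 r_0,\mathbf r_1,\mathbf s}\sum_{b'}\langle\Phi^{\mathbf s}_{\mathbf r_0\mathbf r_1}\rvert\,\Pi^{\mathbf r_{b'}}_{0\mathbf s b'}\otimes\Pi^{\mathbf r_{\bar b'}}_{1\mathbf s b'}\otimes R^{b'}\,\lvert\Phi^{\mathbf s}_{\mathbf r_0\mathbf r_1}\rangle.$$
   Context: $p_n$ is the probability that Bob simultaneously guesses $\mathbf r_{b'}$ from $B_0$ and $\mathbf r_{\bar b'}$ from $B_1$ for uniformly random $\mathbf r_0,\mathbf r_1,\mathbf s$, where $\bar b'=b'\oplus1$. *)

From mathcomp Require Import all_boot all_order all_algebra.
From mathcomp Require Import mxtens.
Set Implicit Arguments. Unset Strict Implicit. Unset Printing Implicit Defensive.
Import Order.TTheory GRing.Theory Num.Theory.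
Local Open Scope ring_scope.

Section Q.
Variable C : numClosedFieldType.

Definition adjmx {m n} (A : 'M[C]_(m, n)) : 'M[C]_(n, m) := (map_mx Num.conj A)^T.

Definition ket (a : bool) : 'cV[C]_2 := delta_mx (if a then 1 else 0) 0.

Definition kethat (a : bool) : 'cV[C]_2 :=
  (sqrtC 2)^-1 *: (ket false + (-1) ^+ a *: ket true).

(* |psi^s_{r0 r1}>_{A0 A1} = |r0>_{A_s} (x) |hat r1>_{A_{1-s}}, with the
   tensor factor A0 written first *)
Definition psi (s r0 r1 : bool) : 'cV[C]_(2 * 2) :=
  if s then tensmx (kethat r1) (ket r0) else tensmx (ket r0) (kethat r1).

Lemma Psi_dim (k : nat) : (((2 * 2 * 4 ^ k)%N = (4 ^ k.+1)%N) * ((1 * 1)%N = 1%N))%type.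
Proof. by rewrite expnS. Qed.

Lemma col_dim (m : nat) : ((m = m) * ((1 * 1)%N = 1%N))%type.
Proof. by []. Qed.

Fixpoint Psi_rec (k : nat) (f : nat -> bool * bool * bool) : 'cV[C]_(4 ^ k) :=
  match k return 'cV[C]_(4 ^ k) with
  | 0 => 1%:M
  | k'.+1 => castmx (Psi_dim k')
               (tensmx (psi (f 0%N).1.1 (f 0%N).1.2 (f 0%N).2)
                       (Psi_rec k' (fun j => f j.+1)))
  end.

Definition Psi (n : nat) (s r0 r1 : n.-tuple bool) : 'cV[C]_(4 ^ n) :=
  Psi_rec n (fun j => (nth false s j, nth false r0 j, nth false r1 j)).

Definition unitary_mx {m n} (U : 'M[C]_(m, n)) : Prop :=
  adjmx U *m U = 1%:M /\ U *m adjmx U = 1%:M.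

Definition unit_vector {d} (v : 'cV[C]_d) : Prop := adjmx v *m v = 1%:M.

Definition projective_measurement (I : finType) {d} (P : I -> 'M[C]_d) : Prop :=
  (forall e, adjmx (P e) = P e) /\ (forall e, P e *m P e = P e) /\
  \sum_(e : I) P e = 1%:M.

Definition p_n (n dE d0 d1 d' : nat) (chi : 'cV[C]_dE)
  (U : 'M[C]_(d0 * d1 * d', 4 ^ n * dE)) (R : bool -> 'M[C]_d')
  (Pi0 : n.-tuple bool -> bool -> n.-tuple bool -> 'M[C]_d0)
  (Pi1 : n.-tuple bool -> bool -> n.-tuple bool -> 'M[C]_d1) : C :=
  (2 ^+ (3 * n))^-1 *
  \sum_(r0 : n.-tuple bool) \sum_(r1 : n.-tuple bool) \sum_(s : n.-tuple bool)
   \sum_(b' : bool)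
    let Phi := U *m castmx (col_dim _) (tensmx (Psi s r0 r1) chi) in
    let r := fun b : bool => if b then r1 else r0 in
    (adjmx Phi *m (tensmx (tensmx (Pi0 s b' (r b')) (Pi1 s b' (r (~~ b'))))
                          (R b')) *m Phi) 0 0.

End Q.

From mathcomp Require Import all_boot all_order all_algebra.
From mathcomp Require Import fingroup perm mxtens ring.
Set Implicit Arguments. Unset Strict Implicit. Unset Printing Implicit Defensive.
Import GRing.Theory Num.Theory.
Local Open Scope ring_scope.

(* Bob measures every pair A_0^j A_1^j in one fixed orthonormal basis of
   C^2 (x) C^2, the columns of [Kmx] / sqrt 6: for either value of s, the basis
   vector d has overlap 3/4 with psi^s_{r0 r1} for (r0, r1) = (guess0 s d,
   guess1 s d).  The unitary U rotates A into this basis and copies the outcome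
   string x into the ancilla, so B_0 and B_1 both hold x and answer the guesses
   read off x and s, while B' is trivial and always yields b' = 0.  For each s,
   the outcome x wins for exactly one pair (r0, r1), with probability
   |<x|Psi>|^2 = (3/4)^n; summing over the 4^n outcomes and averaging over the
   2^(3n) triples (r0, r1, s) gives (3/4)^n. *)

Section Adjoint.
Variable C : numClosedFieldType.

Lemma adjmxE m n (A : 'M[C]_(m, n)) i j : adjmx A i j = (A j i)^*.
Proof. by rewrite !mxE. Qed.

Lemma adjmxK m n (A : 'M[C]_(m, n)) : adjmx (adjmx A) = A.
Proof. by apply/matrixP => i j; rewrite !adjmxE conjCK. Qed.

Lemma adjmxM m n p (A : 'M[C]_(m, n)) (B : 'M[C]_(n, p)) :
  adjmx (A *m B) = adjmx B *m adjmx A.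
Proof. by rewrite /adjmx map_mxM trmx_mul. Qed.

Lemma adjmx1 n : adjmx (1%:M : 'M[C]_n) = 1%:M.
Proof. by rewrite /adjmx map_mx1 trmx1. Qed.

Lemma adjmx_tens m n p q (A : 'M[C]_(m, n)) (B : 'M[C]_(p, q)) :
  adjmx (A *t B) = adjmx A *t adjmx B.
Proof. by rewrite /adjmx map_mxT trmx_tens. Qed.

Lemma adjmx_cast m n m' n' (e : (m = m') * (n = n')) (A : 'M[C]_(m, n)) :
  adjmx (castmx e A) = castmx (e.2, e.1) (adjmx A).
Proof. by rewrite /adjmx map_castmx trmx_cast. Qed.

Lemma adjmx_perm n (s : 'S_n) : adjmx (perm_mx s : 'M[C]_n) = perm_mx s^-1.
Proof. by rewrite /adjmx map_perm_mx tr_perm_mx. Qed.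

End Adjoint.

Section Unitary.
Variable C : numClosedFieldType.

Lemma tens1mx m n : (1%:M : 'M[C]_m) *t (1%:M : 'M[C]_n) = 1%:M.
Proof.
apply/matrixP => x y.
case: (mxtens_indexP x) => i j; case: (mxtens_indexP y) => k l.
rewrite tensmxE !mxE (can_eq (@mxtens_indexK m n)) xpair_eqE.
by case: (i == k); case: (j == l); rewrite ?mulr1 ?mulr0 ?mul0r.
Qed.

Lemma unitary1 n : unitary_mx (1%:M : 'M[C]_n).
Proof. by rewrite /unitary_mx adjmx1 mulmx1. Qed.

Lemma unitary_adj n (A : 'M[C]_n) : unitary_mx A -> unitary_mx (adjmx A).
Proof. by rewrite /unitary_mx adjmxK => -[]. Qed.

Lemma unitary_mul n (A B : 'M[C]_n) :
  unitary_mx A -> unitary_mx B -> unitary_mx (A *m B).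
Proof.
move=> [A'A AA'] [B'B BB']; rewrite /unitary_mx adjmxM; split.
  by rewrite mulmxA -(mulmxA _ _ A) A'A mulmx1 B'B.
by rewrite mulmxA -(mulmxA _ B) BB' mulmx1 AA'.
Qed.

Lemma unitary_tens m n (A : 'M[C]_m) (B : 'M[C]_n) :
  unitary_mx A -> unitary_mx B -> unitary_mx (A *t B).
Proof.
move=> [A'A AA'] [B'B BB'].
by rewrite /unitary_mx adjmx_tens !tensmx_mul A'A AA' B'B BB' tens1mx.
Qed.

Lemma unitary_perm n (s : 'S_n) : unitary_mx (perm_mx s : 'M[C]_n).
Proof. by rewrite /unitary_mx adjmx_perm -!perm_mxM mulVg mulgV perm_mx1. Qed.

Lemma unitary_castmx m n m' n' (e : (m = m') * (n = n')) (A : 'M[C]_(m, n)) :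
  unitary_mx A -> unitary_mx (castmx e A).
Proof. by case: e => em en; case: m' / em; case: n' / en; rewrite castmx_id. Qed.

End Unitary.

Section Measurement.
Variable C : numClosedFieldType.

Definition label_mx (I : finType) d (f : 'I_d -> I) (e : I) : 'M[C]_d :=
  diag_mx (\row_x (f x == e)%:R).

Lemma projective_measurement_label (I : finType) d (f : 'I_d -> I) :
  projective_measurement (label_mx f).
Proof.
split; [|split].
- move=> e; apply/matrixP => x y; rewrite adjmxE !mxE.
  have [->|_] := eqVneq x y; first by rewrite !mulr1n conjC_nat.
  by rewrite !mulr0n conjC0.
- move=> e; rewrite /label_mx mul_diag_mx; apply/matrixP => x y; rewrite !mxE.
  by case: (f x == e); rewrite ?mul1r ?mul0r ?mul0rn.
apply/matrixP => x y; rewrite summxE !mxE.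
under eq_bigr => e _ do rewrite !mxE.
rewrite sumrMnl (bigD1 (f x)) //= eqxx big1 ?addr0 // => e /negbTE.
by rewrite eq_sym => ->.
Qed.

Lemma unit_vector_delta d (i : 'I_d) : unit_vector (delta_mx i 0 : 'cV[C]_d).
Proof.
apply/matrixP => a b; rewrite [a]ord1 [b]ord1 !mxE (bigD1 i) //=.
rewrite big1 => [|x /negbTE xi]; first by rewrite adjmxE !mxE eqxx conjC1 mulr1 addr0.
by rewrite adjmxE !mxE xi conjC0 mul0r.
Qed.

End Measurement.

Lemma castmx_mulmx (R : pzRingType) m n p m' n' p' (em : m = m')
    (e : (n = n') * (p = p')) (A : 'M[R]_(m, n)) (B : 'M[R]_(n, p)) :
  castmx (em, e.1) A *m castmx e B = castmx (em, e.2) (A *m B).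
Proof. by case: e => en ep; case: m' / em; case: n' / en; case: p' / ep. Qed.

Lemma sum_mxtens (V : nmodType) m n (F : 'I_(m * n) -> V) :
  \sum_(x < m * n) F x = \sum_(i < m) \sum_(j < n) F (mxtens_index (i, j)).
Proof.
rewrite pair_big (reindex (@mxtens_index m n)) /=; last first.
  by exists (@mxtens_unindex m n) => x _; rewrite (mxtens_indexK, mxtens_unindexK).
by apply: eq_bigr => -[i j].
Qed.

Lemma sum_indicator (R : pzSemiRingType) (I : finType) (x : I) (F : I -> R) :
  \sum_i (x == i)%:R * F i = F x.
Proof.
rewrite (bigD1 x) //= eqxx mul1r big1 ?addr0 // => i /negbTE.
by rewrite eq_sym => ->; rewrite mul0r.
Qed.

Lemma sum_indicator2 (R : pzSemiRingType) (I J S : finType)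
    (f : S -> I) (g : S -> J) (a : R) :
  \sum_(i : I) \sum_(j : J) \sum_(s : S) (f s == i)%:R * ((g s == j)%:R * a) =
  #|S|%:R * a.
Proof.
under eq_bigr => i _ do rewrite exchange_big.
rewrite exchange_big /=.
under eq_bigr => s _ do under eq_bigr => i _ do rewrite -mulr_sumr sum_indicator.
under eq_bigr => s _ do rewrite sum_indicator.
by rewrite sumr_const mulr_natl.
Qed.

Section QuadraticForm.
Variable C : numClosedFieldType.

Lemma diag_form m (a : 'rV[C]_m) (v : 'cV[C]_m) :
  (adjmx v *m diag_mx a *m v) 0 0 = \sum_x a 0 x * `|v x 0| ^+ 2.
Proof.
rewrite mul_mx_diag mxE; apply: eq_bigr => x _.
by rewrite !mxE normCKC mulrCA mulrA.
Qed.

Lemma castmx_form m m' p (e : m = m') (M : 'M[C]_(m, p)) (Y : 'cV[C]_p)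
    (D : 'M[C]_m) :
  let Phi := castmx (e, erefl p) M *m Y in
  adjmx Phi *m castmx (e, e) D *m Phi = adjmx (M *m Y) *m D *m (M *m Y).
Proof. by case: m' / e; rewrite !castmx_id. Qed.

Lemma tens_diag_mx m n (a : 'rV[C]_m) (b : 'rV[C]_n) :
  diag_mx a *t diag_mx b =
  diag_mx (\row_x (a 0 (mxtens_unindex x).1 * b 0 (mxtens_unindex x).2)).
Proof.
apply/matrixP => x y.
case: (mxtens_indexP x) => i j; case: (mxtens_indexP y) => k l.
rewrite tensmxE !mxE mxtens_indexK (can_eq (@mxtens_indexK m n)) xpair_eqE.
by case: (i == k); case: (j == l); rewrite ?mulr0n ?mulr1n ?mulr0 ?mul0r.
Qed.

Variables (m : nat) (z : 'I_m).

(* (i, j) |-> (i, tperm z i j) maps (i, z) to (i, i): it copies i into the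
   second register when that register starts in state z. *)
Definition copy_fun (x : 'I_(m * m)) : 'I_(m * m) :=
  let ij := mxtens_unindex x in mxtens_index (ij.1, tperm z ij.1 ij.2).

Lemma copy_funK : involutive copy_fun.
Proof.
move=> x; rewrite /copy_fun mxtens_indexK /= tpermK.
exact: mxtens_unindexK.
Qed.

Definition copy_perm : 'S_(m * m) := perm (inv_inj copy_funK).

Lemma copy_tens_delta (c : 'cV[C]_m) i j :
  (perm_mx copy_perm *m (c *t (delta_mx z 0 : 'cV_m)) : 'cV_(m * m))
    (mxtens_index (i, j)) 0 =
  c i 0 * (j == i)%:R.
Proof.
have idx0 : (0 : 'I_(1 * 1)) = mxtens_index (0, 0) by apply: val_inj.
rewrite -row_permE mxE permE /copy_fun mxtens_indexK [X in _ _ X = _]idx0.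
by rewrite tensmxE !mxE /= (canF_eq (tpermK z i)) tpermL andbT.
Qed.

Lemma copy_form (c : 'cV[C]_m) (a b : 'rV[C]_m) :
  let v : 'cV_(m * m) := perm_mx copy_perm *m (c *t (delta_mx z 0 : 'cV_m)) in
  (adjmx v *m (diag_mx a *t diag_mx b) *m v) 0 0 =
  \sum_i a 0 i * b 0 i * `|c i 0| ^+ 2.
Proof.
move=> v; rewrite tens_diag_mx diag_form sum_mxtens /v; apply: eq_bigr => i _.
rewrite (bigD1 i) // big1 => [|j /negbTE ji]; last first.
  by rewrite copy_tens_delta ji mulr0 normr0 expr0n mulr0.
by rewrite Monoid.mulm1 copy_tens_delta eqxx mulr1 mxE mxtens_indexK.
Qed.

End QuadraticForm.

(* An index y of C^2 (x) C^2 stands for the bits (y / 2, y mod 2) of (A0, A1);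
   in [psi_int], c is the bit read in the computational basis and h the one
   read in the Hadamard basis. *)
Definition psi_int (s r0 r1 : bool) : 'cV[int]_(2 * 2) :=
  \col_y let: (c, h) := if s then (odd y, (1 < y)%N) else ((1 < y)%N, odd y) in
         (c == r0)%:R * (-1) ^+ (r1 && h).

Definition Kmx : 'M[int]_(2 * 2) :=
  \matrix_(y, d) (nth [::] [:: [:: 2; 1; -1; 0];
                              [:: 1; -2; 0; -1];
                              [:: 1; 0; 2; 1];
                              [:: 0; 1; 1; -2]] y)`_d.

Definition guess0 (s : bool) (d : nat) : bool := if s then odd d else (1 < d)%N.
Definition guess1 (s : bool) (d : nat) : bool :=
  if s then (1 < d)%N (+) odd d else odd d.

Lemma Kmx_orthogonal : Kmx^T *m Kmx = 6%:M.
Proof.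
apply/matrixP => i j; rewrite !mxE !big_ord_recl big_ord0 !mxE.
by case: i => [[|[|[|[|i]]]] Hi] //; case: j => [[|[|[|[|j]]]] Hj].
Qed.

Lemma Kmx_overlap s (d : 'I_(2 * 2)) :
  ((Kmx^T *m psi_int s (guess0 s d) (guess1 s d)) d 0) ^+ 2 = 9.
Proof.
rewrite !mxE !big_ord_recl big_ord0 !mxE.
by case: s; case: d => [[|[|[|[|d]]]] Hd].
Qed.

Section Basis.
Variable C : numClosedFieldType.

Lemma psiE s r0 r1 :
  psi C s r0 r1 = (sqrtC 2)^-1 *: map_mx intr (psi_int s r0 r1).
Proof.
apply/matrixP => y z; rewrite [z]ord1 /psi.
case: s; rewrite !mxE /= /kethat /ket ?mxE -!val_eqE /=.
all: case: y => [[|[|[|[|y]]]] Hy] //=.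
all: by case: r0; case: r1; rewrite /=; ring.
Qed.

Definition basis_mx : 'M[C]_(2 * 2) := (sqrtC 6)^-1 *: map_mx intr Kmx.

Lemma invsqrtC_nat_ge0 n : 0 <= (sqrtC n%:R)^-1 :> C.
Proof. by rewrite invr_ge0 sqrtC_ge0 ler0n. Qed.

Lemma adjmx_basis : adjmx basis_mx = (sqrtC 6)^-1 *: (map_mx intr Kmx)^T.
Proof.
apply/matrixP => i j.
by rewrite !mxE rmorphM /= geC0_conj ?invsqrtC_nat_ge0 ?rmorph_int.
Qed.

Lemma unitary_basis : unitary_mx basis_mx.
Proof.
suff basis'basis : adjmx basis_mx *m basis_mx = 1%:M by split=> //; apply: mulmx1C.
rewrite adjmx_basis /basis_mx -scalemxAl -scalemxAr scalerA map_trmx -map_mxM.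
rewrite Kmx_orthogonal map_scalar_mx scale_scalar_mx -invfM -expr2 sqrtCK /=.
by rewrite mulVf // pnatr_eq0.
Qed.

Lemma basis_overlap s (d : 'I_(2 * 2)) :
  `|(adjmx basis_mx *m psi C s (guess0 s d) (guess1 s d)) d 0| ^+ 2 = 3%:R / 4%:R.
Proof.
rewrite adjmx_basis psiE -scalemxAl -scalemxAr scalerA map_trmx -map_mxM.
rewrite mxE [map_mx _ _ _ _]mxE normrM exprMn.
set v := (_ *m _) d 0.
have -> : `|v%:~R : C| ^+ 2 = 9 by rewrite -normrX -rmorphXn Kmx_overlap normr_nat.
rewrite ger0_norm ?mulr_ge0 ?invsqrtC_nat_ge0 // exprMn !exprVn !sqrtCK.
by field.
Qed.

End Basis.

Fixpoint guesses (g : bool -> nat -> bool) k (f : nat -> bool) (x : nat) : seq bool :=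
  if k is k'.+1 then
    g (f 0%N) (x %/ 4 ^ k')%N :: guesses g k' (f \o succn) (x %% 4 ^ k')%N
  else [::].

Lemma size_guesses g k f x : size (guesses g k f x) = k.
Proof. by elim: k f x => //= k IH f x; rewrite IH. Qed.

Section TensorPower.
Variable C : numClosedFieldType.

Fixpoint basis_pow k : 'M[C]_(4 ^ k) :=
  if k is k'.+1 then
    castmx ((Psi_dim k').1, (Psi_dim k').1) (basis_mx C *t basis_pow k')
  else 1%:M.

Lemma unitary_basis_pow k : unitary_mx (basis_pow k).
Proof.
elim: k => [|k IH]; first exact: unitary1.
exact/unitary_castmx/unitary_tens/IH/unitary_basis.
Qed.

Lemma basis_pow_overlap k f (x : 'I_(4 ^ k)) :
  `|(adjmx (basis_pow k) *m Psi_rec C k (fun j =>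
       (f j, nth false (guesses guess0 k f x) j, nth false (guesses guess1 k f x) j)))
     x 0| ^+ 2 = (3%:R / 4%:R) ^+ k.
Proof.
elim: k f x => [|k IH] f x /=.
  by rewrite adjmx1 mul1mx [x]ord1 mxE eqxx normr1 expr1n.
rewrite adjmx_cast castmx_mulmx adjmx_tens tensmx_mul castmxE mxE.
set d := mxtens_unindex (cast_ord _ x); set o := mxtens_unindex (cast_ord _ 0).
rewrite [o.1]ord1 [o.2]ord1 normrM exprMn [RHS]exprS.
rewrite -[(x %/ 4 ^ k)%N]/(val d.1) -[(x %% 4 ^ k)%N]/(val d.2).
by rewrite basis_overlap IH.
Qed.

End TensorPower.

Section Strategy.
Variables (C : numClosedFieldType) (n : nat).

Definition guess_tuple g (s : n.-tuple bool) (x : 'I_(4 ^ n)) : n.-tuple bool :=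
  Tuple (introT eqP (size_guesses g n (nth false s) x)).

Definition origin : 'I_(4 ^ n) := Ordinal (expn_gt0 4 n : (0 < 4 ^ n)%N).

Definition chi_strat : 'cV[C]_(4 ^ n) := delta_mx origin 0.

Definition U_strat : 'M[C]_(4 ^ n * 4 ^ n * 1, 4 ^ n * 4 ^ n) :=
  castmx (esym (muln1 _), erefl)
    (perm_mx (copy_perm origin) *m (adjmx (basis_pow C n) *t 1%:M)).

Definition R_strat : bool -> 'M[C]_1 := label_mx C (fun _ => false).

Definition Pi_strat g (s : n.-tuple bool) (_ : bool) : n.-tuple bool -> 'M[C]_(4 ^ n) :=
  label_mx C (guess_tuple g s).

Lemma unitary_U_strat : unitary_mx U_strat.
Proof.
apply/unitary_castmx/unitary_mul; first exact: unitary_perm.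
exact/unitary_tens/unitary1/unitary_adj/unitary_basis_pow.
Qed.

Lemma guess_tuple_overlap s x :
  `|(adjmx (basis_pow C n) *m
       Psi C s (guess_tuple guess0 s x) (guess_tuple guess1 s x)) x 0| ^+ 2 =
  (3%:R / 4%:R) ^+ n.
Proof. exact: basis_pow_overlap. Qed.

Lemma strategy_term s r0 r1 :
  \sum_(b' : bool)
    (let Phi := U_strat *m castmx (col_dim _) (Psi C s r0 r1 *t chi_strat) in
     let r := fun b : bool => if b then r1 else r0 in
     (adjmx Phi *m ((Pi_strat guess0 s b' (r b') *t Pi_strat guess1 s b' (r (~~ b')))
                      *t R_strat b') *m Phi) 0 0) =
  \sum_x (guess_tuple guess0 s x == r0)%:R *
         ((guess_tuple guess1 s x == r1)%:R * (3%:R / 4%:R) ^+ n).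
Proof.
have R_true : R_strat true = 0 by apply/matrixP => i j; rewrite !mxE /= mul0rn.
have R_false : R_strat false = 1%:M.
  by apply/matrixP => i j; rewrite [i]ord1 [j]ord1 !mxE.
rewrite big_bool /= R_true tensmx0 mulmx0 mul0mx mxE add0r.
rewrite R_false tens_mx_scalar scale1r castmx_id /U_strat castmx_form.
rewrite -!(mulmxA (perm_mx _)) (tensmx_mul _ 1%:M (Psi C s r0 r1) chi_strat) mul1mx.
rewrite /Pi_strat /label_mx copy_form; apply: eq_bigr => x _; rewrite 2!mxE.
have [<-|_] := eqVneq (guess_tuple guess0 s x) r0; last by rewrite !mulr0n !mul0r.
have [<-|_] := eqVneq (guess_tuple guess1 s x) r1.
  by rewrite !mulr1n !mul1r guess_tuple_overlap.
by rewrite !mulr0n !(mulr0, mul0r).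
Qed.

Lemma p_n_strat :
  p_n chi_strat U_strat R_strat (Pi_strat guess0) (Pi_strat guess1) =
  (3%:R / 4%:R) ^+ n.
Proof.
rewrite /p_n.
under eq_bigr => r0 _ do under eq_bigr => r1 _ do under eq_bigr => s _ do
  rewrite strategy_term.
under eq_bigr => r0 _ do under eq_bigr => r1 _ do rewrite pair_big /=.
rewrite sum_indicator2 card_prod card_tuple card_bool card_ord.
have -> : ((2 ^ n * 4 ^ n)%N%:R : C) = 2 ^+ (3 * n).
  by rewrite exprM -!natrX -expnMn.
by rewrite mulKf // expf_neq0 // pnatr_eq0.
Qed.

End Strategy.

Theorem mainTheorem2 (C : numClosedFieldType) (n : nat) : (0 < n)%N ->
  exists (dE d0 d1 d' : nat) (chi : 'cV[C]_dE)
         (U : 'M[C]_(d0 * d1 * d', 4 ^ n * dE)) (R : bool -> 'M[C]_d')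
         (Pi0 : n.-tuple bool -> bool -> n.-tuple bool -> 'M[C]_d0)
         (Pi1 : n.-tuple bool -> bool -> n.-tuple bool -> 'M[C]_d1),
    unit_vector chi /\ unitary_mx U /\ projective_measurement R /\
    (forall s b', projective_measurement (Pi0 s b')) /\
    (forall s b', projective_measurement (Pi1 s b')) /\
    p_n chi U R Pi0 Pi1 = (3%:R / 4%:R) ^+ n.
Proof.
move=> _.
exists (4 ^ n)%N, (4 ^ n)%N, (4 ^ n)%N, 1%N, (chi_strat C n), (U_strat C n),
  (R_strat C), (@Pi_strat C n guess0), (@Pi_strat C n guess1).
split; first exact: unit_vector_delta.
split; first exact: unitary_U_strat.
split; first exact: projective_measurement_label.
split; first by move=> s b; exact: projective_measurement_label.
split; first by move=> s b; exact: projective_measurement_label.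
exact: p_n_strat.
Qed.
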